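(* Let $\Sigma$ be a finite alphabet, $L \subseteq \Sigma^*$ regular, and $\mathcal{A}=(Q,\Sigma,q_0,\delta,F)$ its minimal DFA. Then $L\in\mathsf{F}(\mathcal{O}(1))$ if and only if for all $x,y \in \Sigma^*$ with $|x|=|y|$ and all $z \in \Sigma^{|Q|}$ we have $\mathcal{A}(xz) = \mathcal{A}(yz)$.
   Context: $\mathcal{A}(w)=\delta(q_0,w)$ denotes the state reached on input $w$. Fix $a\in\Sigma$; $\mathrm{last}_n(a_1\cdots a_m)=a_{m-n+1}\cdots a_m$ if $n\le m$, else $a^{n-m}a_1\cdots a_m$. A fixed-size sliding window algorithm for $L$ is a sequence $(\mathcal{A}_n)_{n\ge0}$ of deterministic (possibly infinite-state) automata with injective encodings of states into bit strings, $\mathcal{A}_n$ accepting $\{w:\mathrm{last}_n(w)\in L\}$; its space complexity at $n$ is the maximal encoding length of a state of $\mathcal{A}_n$. $\mathsf{F}(\mathcal{O}(1))$ is the class of languages having such an algorithm with constant space complexity. *)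

From mathcomp Require Import all_boot.
Set Implicit Arguments. Unset Strict Implicit. Unset Printing Implicit Defensive.

Record dfa (Sigma : finType) := DFA {
  dstate : finType;
  dinit : dstate;
  ddelta : dstate -> Sigma -> dstate;
  dfinal : pred dstate }.

Definition drun (Sigma : finType) (A : dfa Sigma) (w : seq Sigma) : dstate A :=
  foldl (@ddelta Sigma A) (dinit A) w.

Definition dfa_accepts (Sigma : finType) (A : dfa Sigma) (L : seq Sigma -> Prop) :=
  forall w, dfinal (drun A w) <-> L w.

Definition minimal_dfa (Sigma : finType) (A : dfa Sigma) (L : seq Sigma -> Prop) :=
  dfa_accepts A L /\
  forall B : dfa Sigma, dfa_accepts B L -> #|dstate A| <= #|dstate B|.

Definition lastn (Sigma : Type) (a : Sigma) (n : nat) (w : seq Sigma) : seq Sigma :=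
  if n <= size w then drop (size w - n) w else nseq (n - size w) a ++ w.

Record enc_aut (Sigma : Type) := EncAut {
  astate : Type;
  ainit : astate;
  adelta : astate -> Sigma -> astate;
  afinal : astate -> Prop;
  aenc : astate -> seq bool;
  aenc_inj : injective aenc }.

Definition arun (Sigma : Type) (A : enc_aut Sigma) (w : seq Sigma) : astate A :=
  foldl (@adelta Sigma A) (ainit A) w.

Definition sliding_window_alg (Sigma : Type) (a : Sigma) (L : seq Sigma -> Prop)
    (A : nat -> enc_aut Sigma) :=
  forall n w, afinal (arun (A n) w) <-> L (lastn a n w).

Definition space_le (Sigma : Type) (A : nat -> enc_aut Sigma) (n c : nat) :=
  forall s : astate (A n), size (aenc s) <= c.

Definition F_O1 (Sigma : Type) (a : Sigma) (L : seq Sigma -> Prop) :=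
  exists A : nat -> enc_aut Sigma, sliding_window_alg a L A /\
    exists c n0, forall n, n0 <= n -> space_le A n c.

From mathcomp Require Import all_boot zify.
From Stdlib Require Import Classical.

Set Implicit Arguments.
Unset Strict Implicit.
Unset Printing Implicit Defensive.

(* Call two states of a deterministic machine equivalent after k if they become
   E-equivalent after every input of length at least k.  These relations coarsen as
   k grows and stay constant once two consecutive ones agree; every strict coarsening
   lowers the number of classes, so for a machine whose states inject into a finite
   set T they are constant from k = |T| - 1 on.
   In a sliding window algorithm with c-bit states, acceptance of w depends only on
   the last n letters of w, hence by the above only on its last 2^(c+1) - 1 letters.
   By minimality of A this gives A(xs) = A(ys) whenever |x| = |y| and s is long
   enough, and the same stabilization, applied to A itself with E the equality,
   shortens s to |Q| letters.  Conversely, if A(xz) depends only on |x| and the last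
   |Q| letters z, a window holding the last |Q| letters, padded with a, is a
   constant-space sliding window algorithm. *)

Section EquivalentAfter.

Variables (X S : Type) (step : X -> S -> X) (E : X -> X -> Prop).
Hypothesis E_refl : forall p, E p p.
Hypothesis E_sym : forall p q, E p q -> E q p.
Hypothesis E_trans : forall p q r, E p q -> E q r -> E p r.

Definition eqv_after (k : nat) (p q : X) :=
  forall v : seq S, k <= size v -> E (foldl step p v) (foldl step q v).

Lemma eqv_after_refl k p : eqv_after k p p.
Proof. by move=> v _. Qed.

Lemma eqv_after_sym k p q : eqv_after k p q -> eqv_after k q p.
Proof. by move=> pq v kv; apply/E_sym/pq. Qed.

Lemma eqv_after_trans k p q r :
  eqv_after k p q -> eqv_after k q r -> eqv_after k p r.
Proof. by move=> pq qr v kv; apply: E_trans (pq v kv) (qr v kv). Qed.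

Lemma eqv_after_mono k l p q : k <= l -> eqv_after k p q -> eqv_after l p q.
Proof. by move=> kl pq v lv; apply/pq/(leq_trans kl). Qed.

Lemma eqv_afterS k p q :
  eqv_after k.+1 p q <-> forall s, eqv_after k (step p s) (step q s).
Proof.
split=> [pq s v kv | pq [|s v] //= kv]; first exact: (pq (s :: v)).
exact: pq.
Qed.

Lemma eqv_after_stable k :
  (forall p q, eqv_after k.+1 p q -> eqv_after k p q) ->
  forall l p q, eqv_after l p q -> eqv_after k p q.
Proof.
move=> stable l p q; have [kl|lk] := leqP k l; last exact/eqv_after_mono/ltnW.
rewrite -(subnKC kl); elim: (l - k) p q => [|d IHd] p q; first by rewrite addn0.
by rewrite addnS => /eqv_afterS pq; apply/stable/eqv_afterS => s; apply: IHd.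
Qed.

(* Classes of a relation on an arbitrary type are counted through families of
   pairwise inequivalent elements. *)
Definition transversal (R : X -> X -> Prop) (k : nat) (f : nat -> X) :=
  forall i j, i < k -> j < k -> R (f i) (f j) -> i = j.

Lemma transversal_card (T : finType) (phi : X -> T) R k f :
  injective phi -> (forall p, R p p) -> transversal R k f -> k <= #|T|.
Proof.
move=> phi_inj R_refl tf.
have inj : injective (fun i : 'I_k => phi (f i)).
  by move=> i j /phi_inj eq_f; apply/ord_inj/tf => //; rewrite eq_f.
by have := leq_card _ inj; rewrite card_ord.
Qed.

Lemma transversal_weaken R R' k f :
  (forall p q, R p q -> R' p q) -> transversal R' k f -> transversal R k f.
Proof. by move=> RR' tf i j ik jk /RR'; apply: tf. Qed.

Lemma transversal_snoc R k f c :
  (forall p q, R p q -> R q p) -> transversal R k f ->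
  (forall j, j < k -> ~ R (f j) c) ->
  transversal R k.+1 (fun j => if j == k then c else f j).
Proof.
move=> R_sym tf fc i j; rewrite !ltnS (leq_eqVlt i) (leq_eqVlt j).
case: (eqVneq i k) => [->|_] /=; case: (eqVneq j k) => [->|_] //= ik jk.
- by move=> /R_sym /(fc j jk).
- by move=> /(fc i ik).
- exact: tf.
Qed.

Lemma transversal_set R k f t c :
  (forall p q, R p q -> R q p) -> (forall p q r, R p q -> R q r -> R p r) ->
  t < k -> R (f t) c -> transversal R k f ->
  transversal R k (fun j => if j == t then c else f j).
Proof.
move=> R_sym R_trans tk ftc tf i j ik jk.
have tf_t l : l < k -> R c (f l) -> t = l.
  by move=> lk /(R_trans _ _ _ ftc); apply: tf.
case: (eqVneq i t) => [->|_]; case: (eqVneq j t) => [->|_] //.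
- exact: tf_t.
- by move=> /R_sym /(tf_t i ik).
- exact: tf.
Qed.

Lemma transversal_refine i k f a b :
  eqv_after i.+1 a b -> ~ eqv_after i a b ->
  transversal (eqv_after i.+1) k f -> exists g, transversal (eqv_after i) k.+1 g.
Proof.
move=> ab nab tf.
have mono p q : eqv_after i p q -> eqv_after i.+1 p q by apply/eqv_after_mono.
have [[t [tk fta]]|none] := classic (exists t, t < k /\ eqv_after i.+1 (f t) a).
- pose f' j := if j == t then a else f j.
  have tf' : transversal (eqv_after i.+1) k f'.
    exact: transversal_set (@eqv_after_sym _) (@eqv_after_trans _) tk fta tf.
  exists (fun j => if j == k then b else f' j).
  apply: transversal_snoc (@eqv_after_sym i) (transversal_weaken mono tf') _.
  move=> j jk f'b; apply: nab.
  have jt : j = t.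
    apply: tf' jk tk _; rewrite {2}/f' eqxx.
    exact: eqv_after_trans (mono _ _ f'b) (eqv_after_sym ab).
  by move: f'b; rewrite jt /f' eqxx.
- exists (fun j => if j == k then a else f j).
  apply: transversal_snoc (@eqv_after_sym i) (transversal_weaken mono tf) _.
  by move=> j jk /mono fja; apply: none; exists j.
Qed.

Lemma transversal_of_unstable (x0 : X) i d :
  (forall j, i <= j < i + d -> exists a b, eqv_after j.+1 a b /\ ~ eqv_after j a b) ->
  exists f, transversal (eqv_after i) d.+1 f.
Proof.
elim: d i => [|d IHd] i unstable.
  by exists (fun=> x0) => j l; rewrite !ltnS !leqn0 => /eqP-> /eqP->.
have [|f tf] := IHd i.+1.
  by move=> j /andP[ij jd]; apply: unstable; apply/andP; split; lia.
have [|a [b [ab nab]]] := unstable i; first by apply/andP; split; lia.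
exact: transversal_refine ab nab tf.
Qed.

Lemma eqv_after_stabilizes (T : finType) (phi : X -> T) :
  injective phi -> forall l p q, eqv_after l p q -> eqv_after #|T|.-1 p q.
Proof.
move=> phi_inj l p q pq.
suff [i iT stable] : exists2 i, i < #|T| &
    forall p q, eqv_after i.+1 p q -> eqv_after i p q.
  by apply: eqv_after_mono (eqv_after_stable stable pq); lia.
apply: NNPP => none.
have [f tf] : exists f, transversal (eqv_after 0) #|T|.+1 f.
  apply: (transversal_of_unstable p) => j /andP[_ jT].
  apply: NNPP => stable_j; apply: none; exists j => // a b ab.
  by apply: NNPP => nab; apply: stable_j; exists a, b.
by have := transversal_card phi_inj (@eqv_after_refl 0) tf; rewrite ltnn.
Qed.

End EquivalentAfter.

Lemma arun_cat (Sigma : Type) (A : enc_aut Sigma) w v :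
  arun A (w ++ v) = foldl (@adelta _ A) (arun A w) v.
Proof. exact: foldl_cat. Qed.

Lemma drun_cat (Sigma : finType) (A : dfa Sigma) w v :
  drun A (w ++ v) = foldl (@ddelta _ A) (drun A w) v.
Proof. exact: foldl_cat. Qed.

Section LastLetters.

Variables (T : Type) (a : T).

Lemma lastnE n w : lastn a n w = drop (size w) (nseq n a ++ w).
Proof. by rewrite /lastn drop_cat size_nseq; case: leqP => // _; rewrite drop_nseq. Qed.

Lemma size_lastn n w : size (lastn a n w) = n.
Proof. rewrite lastnE size_drop size_cat size_nseq; lia. Qed.

Lemma lastn_size w : lastn a (size w) w = w.
Proof. by rewrite /lastn leqnn subnn drop0. Qed.

Lemma lastn_catr n u v : n <= size v -> lastn a n (u ++ v) = lastn a n v.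
Proof.
move=> nv; rewrite /lastn size_cat nv ifT; last lia.
rewrite drop_cat ifN; last lia.
congr drop; lia.
Qed.

Lemma lastn_rcons n w c : lastn a n (rcons w c) = behead (rcons (lastn a n w) c).
Proof.
case: n => [|n]; first by rewrite /lastn !leq0n !subn0 !drop_size.
rewrite !lastnE size_rcons -drop1 -rcons_cat !drop_rcons ?drop_drop ?add1n //.
  by rewrite size_drop size_cat size_nseq; lia.
by rewrite size_cat size_nseq; lia.
Qed.

Lemma drop_lastn m n w : m <= n -> drop (n - m) (lastn a n w) = lastn a m w.
Proof.
move=> mn; rewrite -(subnK mn) !lastnE drop_drop addnK nseqD -catA drop_cat size_nseq.
by rewrite ifN; [congr drop; lia | lia].
Qed.

End LastLetters.

Definition suffix_determined (Sigma : finType) (A : dfa Sigma) (k : nat) :=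
  forall x y z : seq Sigma, size x = size y -> size z = k ->
    drun A (x ++ z) = drun A (y ++ z).

Lemma unary_rank_inj (T : finType) : injective (fun x : T => nseq (enum_rank x) true).
Proof. by move=> x y /(congr1 size); rewrite !size_nseq => /ord_inj/enum_rank_inj. Qed.

Section WindowAlgorithm.

Variables (Sigma : finType) (a : Sigma) (L : seq Sigma -> Prop) (N : nat).

Definition window_step (s : N.-tuple Sigma) (c : Sigma) : N.-tuple Sigma :=
  [tuple of behead (rcons s c)].

(* At most one of [nseq (n - N) a] and [drop (N - n)] is active: the window is
   padded when n > N and cut down when n < N. *)
Definition window_alg (n : nat) : enc_aut Sigma :=
  @EncAut Sigma (N.-tuple Sigma) (nseq_tuple N a) window_step
    (fun s => L (nseq (n - N) a ++ drop (N - n) s))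
    (fun s => nseq (enum_rank s) true) (@unary_rank_inj _).

Lemma window_alg_run n w : val (arun (window_alg n) w) = lastn a N w.
Proof.
elim/last_ind: w => [|w c IHw]; first by rewrite lastnE drop0 cats0.
by rewrite -cats1 arun_cat /= IHw cats1 lastn_rcons.
Qed.

Lemma window_alg_space n : space_le window_alg n (#|Sigma| ^ N).
Proof. by move=> s; rewrite size_nseq -card_tuple ltnW. Qed.

Lemma window_alg_correct (A : dfa Sigma) :
  dfa_accepts A L -> suffix_determined A N -> sliding_window_alg a L window_alg.
Proof.
move=> acc sdet n w; rewrite /= window_alg_run -!acc.
suff -> : drun A (nseq (n - N) a ++ drop (N - n) (lastn a N w)) =
  drun A (lastn a n w) by [].
have [nN|Nn] := leqP n N.
  have -> : n - N = 0 by lia.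
  by rewrite drop_lastn.
have -> : N - n = 0 by lia.
rewrite drop0 -(cat_take_drop (n - N) (lastn a n w)) drop_lastn; last exact: ltnW.
by apply: sdet; rewrite ?size_lastn // size_nseq size_takel // size_lastn leq_subr.
Qed.

End WindowAlgorithm.

Lemma suffix_determined_F_O1 (Sigma : finType) (a : Sigma) L (A : dfa Sigma) k :
  dfa_accepts A L -> suffix_determined A k -> F_O1 a L.
Proof.
move=> acc sdet; exists (window_alg a L k); split; first exact: window_alg_correct sdet.
by exists (#|Sigma| ^ k), 0 => n _; apply: window_alg_space.
Qed.

(* The leading 1 makes the code injective across all lengths. *)
Fixpoint bits_code (bs : seq bool) : nat :=
  if bs is b :: bs' then b + (bits_code bs').*2 else 1.

Lemma bits_code_inj : injective bits_code.
Proof.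
have code_gt0 bs : 0 < bits_code bs by elim: bs => //= b bs; lia.
elim=> [|b bs IH] [|b' bs'] //= eq_code.
- by have := code_gt0 bs'; case: b' eq_code; lia.
- by have := code_gt0 bs; case: b eq_code; lia.
- have eq_b : b = b' by move/(congr1 odd): eq_code; rewrite !oddD !odd_double !oddb !addbF.
  by move/(congr1 half): eq_code; rewrite !half_bit_double eq_b => /IH ->.
Qed.

Lemma bits_code_lt c bs : size bs <= c -> bits_code bs < 2 ^ c.+1.
Proof.
elim: bs c => [|b bs IH] c /=; first by rewrite -[1]/(2 ^ 0) ltn_exp2l.
by case: c => // c; rewrite ltnS => /IH; rewrite [2 ^ c.+2]expnS; case: b; lia.
Qed.

Definition nerode_equiv (Sigma : finType) (A : dfa Sigma) :=
  eqv_after (@ddelta _ A) (fun p q => dfinal p <-> dfinal q) 0.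

Section MergeStates.

Variables (Sigma : finType) (A : dfa Sigma) (p q : dstate A).
Hypothesis neq_pq : p != q.
Hypothesis nerode_pq : nerode_equiv p q.

Definition redirect (t : dstate A) : dstate A := if t == p then q else t.

Lemma redirect_neq t : redirect t != p.
Proof. by rewrite /redirect; case: (eqVneq t p) => // _; rewrite eq_sym. Qed.

Lemma nerode_redirect t : nerode_equiv (redirect t) t.
Proof.
rewrite /redirect; case: (eqVneq t p) => [->|_]; last exact: eqv_after_refl.
by apply: eqv_after_sym nerode_pq; tauto.
Qed.

Definition merge_dfa : dfa Sigma :=
  let redirect' t : {r : dstate A | r != p} := Sub (redirect t) (redirect_neq t) in
  DFA (redirect' (dinit A)) (fun r c => redirect' (ddelta (val r) c))
    (fun r => dfinal (val r)).

Lemma card_merge_dfa : #|dstate merge_dfa| = #|dstate A|.-1.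
Proof. by rewrite card_sig -(cardC1 p); apply: eq_card. Qed.

Lemma merge_dfa_accepts L : dfa_accepts A L -> dfa_accepts merge_dfa L.
Proof.
have run w : forall r s, nerode_equiv (val r) s ->
    nerode_equiv (val (foldl (@ddelta _ merge_dfa) r w)) (foldl (@ddelta _ A) s w).
  elim: w => [|c w IHw] r s rs //=; apply: IHw => /=.
  apply: eqv_after_trans (nerode_redirect _) _; first tauto.
  by move/(eqv_after_mono (leqnSn 0))/eqv_afterS: rs.
move=> acc w; rewrite -acc.
exact: run w (dinit merge_dfa) _ (nerode_redirect _) [::] isT.
Qed.

End MergeStates.

Lemma minimal_dfa_nerode_eq (Sigma : finType) (A : dfa Sigma) L (p q : dstate A) :
  minimal_dfa A L -> nerode_equiv p q -> p = q.
Proof.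
move=> [acc minA] pq; case: (eqVneq p q) => // neq_pq.
have := minA _ (merge_dfa_accepts neq_pq pq acc); rewrite card_merge_dfa.
have : 0 < #|dstate A| by apply/card_gt0P; exists p.
lia.
Qed.

Lemma sliding_window_forgets (Sigma : Type) (a : Sigma) L An n c :
  sliding_window_alg a L An -> space_le An n c ->
  forall w w' v, (2 ^ c.+1).-1 <= size v ->
    L (lastn a n (w ++ v)) <-> L (lastn a n (w' ++ v)).
Proof.
move=> sw sp w w' v v_ge.
pose code (s : astate (An n)) : 'I_(2 ^ c.+1) := Ordinal (bits_code_lt (sp s)).
have code_inj : injective code by move=> s t /(congr1 val) /bits_code_inj /aenc_inj.
have forget_n : eqv_after (@adelta _ (An n)) (fun s t => afinal s <-> afinal t) n
    (arun (An n) w) (arun (An n) w').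
  by move=> u nu; rewrite -!arun_cat !sw !lastn_catr.
have : eqv_after (@adelta _ (An n)) (fun s t => afinal s <-> afinal t)
    #|'I_(2 ^ c.+1)|.-1 (arun (An n) w) (arun (An n) w').
  by apply: (eqv_after_stabilizes _ _ _ code_inj forget_n); tauto.
by rewrite card_ord => /(_ v v_ge); rewrite -!arun_cat !sw.
Qed.

Lemma sliding_window_drun_eq (Sigma : finType) (a : Sigma) L (A : dfa Sigma) An c n0 :
  minimal_dfa A L -> sliding_window_alg a L An ->
  (forall n, n0 <= n -> space_le An n c) ->
  forall x y s, size x = size y -> maxn n0 (2 ^ c.+1).-1 <= size s ->
    drun A (x ++ s) = drun A (y ++ s).
Proof.
move=> minA sw sp x y s xy s_ge; apply: (minimal_dfa_nerode_eq minA) => v _ /=.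
rewrite -!drun_cat -!catA !minA.1.
have eq_size : size (y ++ s ++ v) = size (x ++ s ++ v) by rewrite !size_cat xy.
rewrite -{1}(lastn_size a (x ++ s ++ v)) -(lastn_size a (y ++ s ++ v)) eq_size.
apply: (sliding_window_forgets sw (sp _ _)); rewrite !size_cat; lia.
Qed.

Lemma F_O1_suffix_determined (Sigma : finType) (a : Sigma) L (A : dfa Sigma) :
  minimal_dfa A L -> F_O1 a L -> suffix_determined A #|dstate A|.
Proof.
move=> minA [An [sw [c [n0 sp]]]] x y z xy zQ.
have merge_xy : eqv_after (@ddelta _ A) eq (maxn n0 (2 ^ c.+1).-1) (drun A x) (drun A y).
  by move=> v v_ge; rewrite -!drun_cat; apply: sliding_window_drun_eq minA sw sp x y v xy v_ge.
have : eqv_after (@ddelta _ A) eq #|dstate A|.-1 (drun A x) (drun A y).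
  by apply: (eqv_after_stabilizes _ _ _ (@inj_id _) merge_xy); congruence.
by move=> /(_ z); rewrite -!drun_cat zQ leq_pred => /(_ isT).
Qed.

Theorem proposition6p5 (Sigma : finType) (a : Sigma) (L : seq Sigma -> Prop)
    (A : dfa Sigma) :
  minimal_dfa A L ->
  (F_O1 a L <->
   forall x y z : seq Sigma, size x = size y -> size z = #|dstate A| ->
     drun A (x ++ z) = drun A (y ++ z)).
Proof.
move=> minA; split; first exact: F_O1_suffix_determined.
exact: suffix_determined_F_O1 minA.1.
Qed.
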